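(* In the multiple zeta setting, $\mathfrak{h}^0[t]$ is closed under the $t$-harmonic product $\star_t$, and $Z^t=Z\circ S^t\colon(\mathfrak{h}^0[t],\star_t)\to\mathbb{R}[t]$ is a $\mathbb{Q}[t]$-algebra homomorphism.
   Context: Multiple zeta setting: $A=\{z_k\mid k=1,2,\ldots\}$, $\mathfrak{h}^1$ is the non-commutative polynomial algebra over $\mathbb{Q}$ in the letters $z_k$ (words are finite sequences of letters, $1$ the empty word), and $\mathfrak{z}$ its $\mathbb{Q}$-span of letters with product $z_k\circ z_l=z_{k+l}$, acting on $\mathfrak{h}^1$ by $a\circ 1=0$, $a\circ(bw)=(a\circ b)w$ ($a,b$ letters, $w$ a word), extended bilinearly. Let $\mathfrak{h}^0=\mathbb{Q}\oplus\bigoplus_{k\geq 2}z_k\mathfrak{h}^1$. Let $Z\colon\mathfrak{h}^0[t]\to\mathbb{R}[t]$ be the $\mathbb{Q}[t]$-linear map with $Z(1)=1$ and $Z(z_{k_1}\cdots z_{k_n})=\zeta(k_1,\ldots,k_n)=\sum_{m_1>\cdots>m_n>0}m_1^{-k_1}\cdots m_n^{-k_n}$ ($k_1\ge2$). The $\mathbb{Q}[t]$-linear operator $S^t$ on $\mathfrak{h}^1[t]$ is given by $S^t(1)=1$, $S^t(aw)=aS^t(w)+t\,a\circ S^t(w)$. The $t$-harmonic product $\star_t$ on $\mathfrak{h}^1[t]$ is the $\mathbb{Q}[t]$-bilinear product with $1\star_t w=w\star_t 1=w$ and $(aw)\star_t(bw')=a(w\star_t bw')+b(aw\star_t w')+(1-2t)(a\circ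 b)(w\star_t w')+(t^2-t)(a\circ b)\circ(w\star_t w')$ for letters $a,b$ and words $w,w'$. *)

From HB Require Import structures.
From mathcomp Require Import all_boot all_order all_algebra.
From Stdlib Require Import Reals ClassicalEpsilon.
Set Implicit Arguments. Unset Strict Implicit. Unset Printing Implicit Defensive.
Import GRing.Theory.
Local Open Scope ring_scope.

(** Words: a word z_{k1}...z_{kn} is the list [:: k1; ...; kn] of letter
    indices (letters of A are z_k, k >= 1; lists containing 0 are never
    produced from elements of h^1 and are excluded by the h^0 predicate). *)
Definition word := seq nat.

Definition Qt := {poly rat}.

(** Elements of h^1[t] are represented as formal finite sums
    sum_i c_i w_i, i.e. lists of (coefficient in Q[t], word). *)
Definition H := seq (Qt * word).

Definition coefH (u : H) (w : word) : Qt := \sum_(p <- u | p.2 == w) p.1.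

Definition oneH : H := [:: (1, [::])].
Definition addH (u v : H) : H := u ++ v.
Definition scaleH (a : Qt) (u : H) : H := [seq (a * p.1, p.2) | p <- u].
Definition lconsH (k : nat) (u : H) : H := [seq (p.1, k :: p.2) | p <- u].
Definition circH (k : nat) (u : H) : H :=
  flatten [seq (match p.2 with
                | [::] => [::]
                | l :: w => [:: (p.1, addn k l :: w)]
                end) | p <- u].

Fixpoint St_word (w : word) : H :=
  match w with
  | [::] => oneH
  | k :: w' => addH (lconsH k (St_word w')) (scaleH 'X (circH k (St_word w')))
  end.
Definition St (u : H) : H := flatten [seq scaleH p.1 (St_word p.2) | p <- u].

Fixpoint star_word (u : word) : word -> H :=
  match u with
  | [::] => fun v => [:: (1, v)]
  | a :: w =>
      fix g (v : word) : H :=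
        match v with
        | [::] => [:: (1, a :: w)]
        | b :: w' =>
            addH (lconsH a (star_word w v))
           (addH (lconsH b (g w'))
           (addH (scaleH (1 - 'X *+ 2) (lconsH (addn a b) (star_word w w')))
                 (scaleH ('X ^+ 2 - 'X) (circH (addn a b) (star_word w w')))))
        end
  end.
Definition starH (u v : H) : H :=
  flatten [seq flatten [seq scaleH (p.1 * q.1) (star_word p.2 q.2) | q <- v] | p <- u].

(** h^0 = Q + sum_{k>=2} z_k h^1 : admissible words *)
Definition adm (w : word) : bool :=
  match w with
  | [::] => true
  | k :: w' => leq 2 k && all (fun l : nat => leq 1 l) w'
  end.
Definition inh0 (u : H) : Prop := forall w, ~~ adm w -> coefH u w = 0.

Definition int2R (z : int) : R :=
  match z with Posz n => INR n | Negz n => Ropp (INR (S n)) end.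
Definition ratR (q : rat) : R := Rdiv (int2R (numq q)) (int2R (denq q)).

(** truncated multiple zeta sums:
    zeta_tr w N = sum_{N >= m1 > ... > mn > 0} m1^-k1 ... mn^-kn *)
Fixpoint zeta_tr (w : word) : nat -> R :=
  match w with
  | [::] => fun _ => R1
  | k :: w' =>
      fix g (N : nat) : R :=
        match N with
        | O => R0
        | S M => Rplus (g M) (Rmult (Rinv (pow (INR (S M)) k)) (zeta_tr w' M))
        end
  end.

Definition mzv (w : word) : R :=
  epsilon (inhabits R0) (fun l => Un_cv (zeta_tr w) l).

(** R[t] represented by coefficient sequences (coefficient of t^n) *)
Definition Rt := nat -> R.
Definition Rt1 : Rt := fun n => if n is O then R1 else R0.
Definition Rtmul (f g : Rt) : Rt := fun n => sum_f_R0 (fun i => Rmult (f i) (g (subn n i))) n.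
Definition Rtadd (f g : Rt) : Rt := fun n => Rplus (f n) (g n).
Definition QtR (a : Qt) : Rt := fun n => ratR (nth 0 (polyseq a) n).

(** Z : h^0[t] -> R[t], Q[t]-linear with Z(w) = zeta(w)
    (on inadmissible words a junk value is used; it never contributes for
    arguments in h^0[t]). *)
Definition Zmap (u : H) : Rt :=
  fun n => foldr (fun p acc => Rplus (Rmult (ratR (nth 0 (polyseq p.1) n)) (mzv p.2)) acc) R0 u.

Definition Zt (u : H) : Rt := Zmap (St u).

(* The proof passes through truncations.  For a level N, replace each
   multiple zeta value zeta(w) by the finite sum zeta_N(w) over N >= m_1 > ...;
   this gives a map ZN u N : R[t] for every u, with no convergence issue.
   Prefixing a letter z_k and acting by z_k o _ become the summation operators
   Dsum k and Esum k on sequences of polynomials, and S^t(z_k w) becomes the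
   interpolated sum Tsum k = Dsum k + t Esum k.  A discrete Leibniz rule
   (Tsum_mul), which mirrors the four terms of the recursion defining star_t,
   then shows by double induction that the truncated map ZtN = ZN o S^t is
   exactly multiplicative at every level N (ZtN_starH).

   Independently, the truncated sums of admissible words increase and are
   bounded by 2 (zeta_tr_adm_bound), hence converge to mzv.  Since S^t and
   star_t send admissible words to combinations of admissible words,
   h^0[t] is stable under both, and on h^0[t] every coefficient of ZtN u N
   converges to the corresponding coefficient of Z^t(u).  Multiplicativity of
   Z^t follows by passing to the limit; unit and linearity are direct. *)

From Stdlib Require Import Reals Lra ClassicalEpsilon FunctionalExtensionality.
From mathcomp Require Import all_boot all_order all_algebra.
Set Implicit Arguments. Unset Strict Implicit. Unset Printing Implicit Defensive.
Import GRing.Theory.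

Definition pos (w : word) : bool := all (fun l => 0 < l)%N w.

Section TruncatedZeta.
Local Open Scope R_scope.

Lemma zeta_tr_consS k w N :
  zeta_tr (k :: w) N.+1 = zeta_tr (k :: w) N + / INR N.+1 ^ k * zeta_tr w N.
Proof. by []. Qed.

Lemma INR_succ_gt0 N : 0 < INR N.+1.
Proof. by apply: lt_0_INR; apply/ltP. Qed.

Lemma inv_pow_gt0 N k : 0 < / INR N.+1 ^ k.
Proof. exact/Rinv_0_lt_compat/pow_lt/INR_succ_gt0. Qed.

Lemma inv_INR_ge0 N : 0 <= / INR N.
Proof.
case: N => [|N]; first by rewrite Rinv_0; lra.
exact/Rlt_le/Rinv_0_lt_compat/INR_succ_gt0.
Qed.

Lemma zeta_tr_ge0 w N : 0 <= zeta_tr w N.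
Proof.
elim: w N => [|k w IHw] N; first by rewrite /=; lra.
elim: N => [|N IHN]; first by rewrite /=; lra.
rewrite zeta_tr_consS; have := inv_pow_gt0 N k; have := IHw N; nra.
Qed.

Lemma zeta_tr_incr w N : zeta_tr w N <= zeta_tr w N.+1.
Proof.
case: w => [|k w]; first by rewrite /=; lra.
rewrite zeta_tr_consS; have := inv_pow_gt0 N k; have := zeta_tr_ge0 w N; nra.
Qed.

Lemma zeta_tr_head_le2 k w N : (2 <= k)%N -> zeta_tr (k :: w) N <= zeta_tr (2%N :: w) N.
Proof.
move=> k_ge2; elim: N => [|N IHN]; first by rewrite /=; lra.
have inv_le : / INR N.+1 ^ k <= / INR N.+1 ^ 2.
  apply: Rinv_le_contravar; first exact/pow_lt/INR_succ_gt0.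
  apply: Rle_pow; last exact/leP.
  by rewrite S_INR; have := pos_INR N; lra.
rewrite !zeta_tr_consS; have := zeta_tr_ge0 w N; nra.
Qed.

Lemma inv_sq_add_inv_le N : / INR N.+2 ^ 2 + / INR N.+2 <= / INR N.+1.
Proof.
have x_gt0 := INR_succ_gt0 N; rewrite (S_INR N.+1).
set x := INR N.+1 in x_gt0 *.
have -> : / (x + 1) ^ 2 + / (x + 1) = (x + 2) / (x + 1) ^ 2 by field; lra.
apply: (Rmult_le_reg_r (x * (x + 1) ^ 2)); first nra.
have -> : (x + 2) / (x + 1) ^ 2 * (x * (x + 1) ^ 2) = (x + 2) * x by field; lra.
have -> : / x * (x * (x + 1) ^ 2) = (x + 1) ^ 2 by field; lra.
nra.
Qed.

Lemma zeta_tr_2_bound N : zeta_tr [:: 2%N] N + / INR N <= 2.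
Proof.
elim: N => [|[|N] IHN]; first by rewrite /= Rinv_0; lra.
  by rewrite /= !Rmult_1_l Rinv_1; lra.
rewrite zeta_tr_consS [zeta_tr [::] _]/= Rmult_1_r.
by have := inv_sq_add_inv_le N; lra.
Qed.

(* Depth reduction: zeta_N(2, l, w) + zeta_N(l, w)/N <= zeta_N(l + 1, w); it
   bounds a sum of depth d + 1 by one of depth d. *)
Lemma zeta_tr_depth_reduction l w N :
  zeta_tr [:: 2%N, l & w] N + zeta_tr (l :: w) N * / INR N <= zeta_tr (l.+1 :: w) N.
Proof.
elim: N => [|N IHN]; first by rewrite /=; lra.
rewrite !zeta_tr_consS.
set A := zeta_tr (l :: w) N; set a := / INR N.+1 ^ l * zeta_tr w N.
have A_ge0 : 0 <= A by apply: zeta_tr_ge0.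
have a_ge0 : 0 <= a by have := inv_pow_gt0 N l; have := zeta_tr_ge0 w N; rewrite /a; nra.
have -> : / INR N.+1 ^ l.+1 * zeta_tr w N = a * / INR N.+1.
  by rewrite /a /= Rinv_mult; ring.
(* At N = 0 both sides vanish because A = zeta_0(l, w) = 0. *)
have step : / INR N.+1 ^ 2 * A + A * / INR N.+1 <= A * / INR N.
  case: N {IHN a a_ge0} @A A_ge0 => [|N] A A_ge0; first by rewrite /A /=; lra.
  by have := inv_sq_add_inv_le N; nra.
move: IHN; rewrite -/A; have := inv_INR_ge0 N.+1; nra.
Qed.

Lemma zeta_tr_adm_bound k w N : (2 <= k)%N -> pos w -> zeta_tr (k :: w) N <= 2.
Proof.
elim: w k => [|l w IHw] k k_ge2.
  by have := zeta_tr_head_le2 [::] N k_ge2; have := zeta_tr_2_bound N; have := inv_INR_ge0 N; lra.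
move=> /andP[l_gt0 w_pos].
have := zeta_tr_head_le2 (l :: w) N k_ge2; have := zeta_tr_depth_reduction l w N.
have : 0 <= zeta_tr (l :: w) N * / INR N.
  by apply: Rmult_le_pos; [apply: zeta_tr_ge0 | apply: inv_INR_ge0].
by have := IHw l.+1 l_gt0 w_pos; lra.
Qed.

Lemma cv_const (a : R) : Un_cv (fun=> a) a.
Proof. by move=> e e_gt0; exists 0%N => n _; rewrite /R_dist Rminus_diag Rabs_R0. Qed.

Lemma zeta_tr_cvg w : adm w -> Un_cv (zeta_tr w) (mzv w).
Proof.
move=> w_adm; apply: epsilon_spec; case: w w_adm => [_|k w /andP[k_ge2 w_pos]].
  by exists 1; apply: cv_const.
have bounded : has_ub (zeta_tr (k :: w)).
  by exists 2 => x [N ->]; apply: zeta_tr_adm_bound.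
by have [l l_lim] := growing_cv _ (zeta_tr_incr _) bounded; exists l.
Qed.

Lemma mzv_nil : mzv [::] = 1.
Proof. by apply: (UL_sequence (zeta_tr [::])); [apply: zeta_tr_cvg | apply: cv_const]. Qed.

End TruncatedZeta.

From mathcomp Require Import Rstruct ring.

Local Open Scope ring_scope.

Lemma int2R_E (z : int) : int2R z = z%:~R.
Proof. by case: z => n; rewrite /int2R ?NegzE ?mulrNz INRE. Qed.

Lemma ratR_E (q : rat) : ratR q = ratr q.
Proof. by rewrite /ratR !int2R_E RdivE. Qed.

Definition toRt (a : Qt) : {poly R} := map_poly ratr a.

Lemma toRtM a b : toRt (a * b) = toRt a * toRt b.
Proof. exact: rmorphM. Qed.

Lemma toRt_polyX : toRt 'X = 'X.
Proof. exact: map_polyX. Qed.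

Lemma toRt1 : toRt 1 = 1.
Proof. exact: rmorph1. Qed.

Lemma coef_toRt a i : (toRt a)`_i = ratr a`_i.
Proof. exact: coef_map. Qed.

Definition wt (k M : nat) : R := Rinv (pow (INR M.+1) k).

Lemma wtD k l M : wt (k + l) M = wt k M * wt l M.
Proof. by rewrite /wt pow_add Rinv_mult. Qed.

Lemma zeta_tr_consE k w N : zeta_tr (k :: w) N = \sum_(M < N) wt k M * zeta_tr w M.
Proof. by elim: N => [|N IHN]; rewrite ?big_ord0 // big_ord_recr /= -IHN. Qed.

Section SummationOperators.
(* Three operators on sequences f : nat -> R[t], mirroring on truncated sums
   the concatenation w |-> z_k w, the action w |-> z_k o w, and their
   combination z_k S^t(w) = z_k w + t z_k o w.  Tsum interpolates between
   f M (at t = 0) and f (M + 1) (at t = 1). *)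
Implicit Types (f g : nat -> {poly R}) (k : nat).

Definition Dsum k f N := \sum_(M < N) (wt k M)%:P * f M.
Definition Esum k f N := \sum_(M < N) (wt k M)%:P * (f M.+1 - f M).
Definition Tsum k f N := \sum_(M < N) (wt k M)%:P * ((1 - 'X) * f M + 'X * f M.+1).

Lemma Tsum0 k f : Tsum k f 0 = 0. Proof. exact: big_ord0. Qed.
Lemma Esum0 k f : Esum k f 0 = 0. Proof. exact: big_ord0. Qed.

Lemma TsumS k f N :
  Tsum k f N.+1 = Tsum k f N + (wt k N)%:P * ((1 - 'X) * f N + 'X * f N.+1).
Proof. exact: big_ord_recr. Qed.

Lemma EsumS k f N : Esum k f N.+1 = Esum k f N + (wt k N)%:P * (f N.+1 - f N).
Proof. exact: big_ord_recr. Qed.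

Lemma Tsum_split k f N : Tsum k f N = Dsum k f N + 'X * Esum k f N.
Proof. rewrite /Tsum /Dsum /Esum mulr_sumr -big_split; apply: eq_bigr => M _ /=; ring. Qed.

(* The discrete Leibniz rule behind the t-harmonic product: the product of two
   interpolated sums decomposes according to the four terms of the recursive
   definition of star_t. *)
Lemma Tsum_mul a b f g N :
  Tsum a (fun M => f M * Tsum b g M) N + Tsum b (fun M => Tsum a f M * g M) N
  + (1 - 'X *+ 2) * Tsum (a + b) (fun M => f M * g M) N
  + ('X ^+ 2 - 'X) * Esum (a + b) (fun M => f M * g M) N = Tsum a f N * Tsum b g N.
Proof.
elim: N => [|N IHN]; first by rewrite !Tsum0 Esum0 !(mulr0, mul0r, addr0).
rewrite !TsumS !EsumS wtD polyCM; move: IHN.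
set T1 := Tsum a _ N; set T2 := Tsum b _ N; set T3 := Tsum (a + b) _ N.
set T4 := Esum (a + b) _ N; set Ta := Tsum a f N; set Tb := Tsum b g N.
move=> IHN; have -> : T1 = Ta * Tb - (T2 + (1 - 'X *+ 2) * T3 + ('X ^+ 2 - 'X) * T4).
  by rewrite -IHN; ring.
ring.
Qed.

(* Differencing an interpolated sum gives an interpolated sum again:
   the truncated form of z_k o S^t(z_l w) = S^t(z_{k+l} w). *)
Lemma Esum_Tsum k l f N : Esum k (Tsum l f) N = Tsum (k + l) f N.
Proof.
elim: N => [|N IHN]; first by rewrite Esum0 Tsum0.
rewrite EsumS TsumS IHN TsumS addrAC subrr add0r wtD polyCM; ring.
Qed.

Section Linearity.
Variables (I : Type) (s : seq I) (c : I -> {poly R}) (F : I -> nat -> {poly R}).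

Lemma Dsum_sum k N :
  Dsum k (fun M => \sum_(i <- s) c i * F i M) N = \sum_(i <- s) c i * Dsum k (F i) N.
Proof.
rewrite /Dsum; under eq_bigr do rewrite mulr_sumr; rewrite exchange_big /=.
by apply: eq_bigr => i _; rewrite mulr_sumr; apply: eq_bigr => M _; rewrite mulrCA.
Qed.

Lemma Esum_sum k N :
  Esum k (fun M => \sum_(i <- s) c i * F i M) N = \sum_(i <- s) c i * Esum k (F i) N.
Proof.
rewrite /Esum; under eq_bigr do rewrite -sumrB mulr_sumr; rewrite exchange_big /=.
apply: eq_bigr => i _; rewrite mulr_sumr; apply: eq_bigr => M _.
by rewrite -mulrBr mulrCA.
Qed.

Lemma Tsum_sum k N :
  Tsum k (fun M => \sum_(i <- s) c i * F i M) N = \sum_(i <- s) c i * Tsum k (F i) N.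
Proof.
rewrite Tsum_split Dsum_sum Esum_sum mulr_sumr -big_split.
by apply: eq_bigr => i _ /=; rewrite Tsum_split; ring.
Qed.

End Linearity.
End SummationOperators.

(* The map Z is Zpoly mzv and
   its truncation at level N is ZN u N = Zpoly (zeta_tr^~ N) u. *)
Definition Zpoly (z : word -> R) (u : H) : {poly R} := \sum_(p <- u) toRt p.1 * (z p.2)%:P.

Section ZpolyLinearity.
Variable z : word -> R.

Lemma Zpoly_cat u v : Zpoly z (u ++ v) = Zpoly z u + Zpoly z v.
Proof. exact: big_cat. Qed.

Lemma Zpoly_scale a u : Zpoly z (scaleH a u) = toRt a * Zpoly z u.
Proof. by rewrite /Zpoly big_map mulr_sumr; apply: eq_bigr => p _; rewrite toRtM mulrA. Qed.

Lemma Zpoly_flatten L : Zpoly z (flatten L) = \sum_(u <- L) Zpoly z u.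
Proof. exact: big_flatten. Qed.

Lemma Zpoly_St u : Zpoly z (St u) = \sum_(p <- u) toRt p.1 * Zpoly z (St_word p.2).
Proof. by rewrite Zpoly_flatten big_map; apply: eq_bigr => p _; rewrite Zpoly_scale. Qed.

Lemma Zpoly_St_cat u v : Zpoly z (St (u ++ v)) = Zpoly z (St u) + Zpoly z (St v).
Proof. by rewrite !Zpoly_St big_cat. Qed.

Lemma Zpoly_St_scale a u : Zpoly z (St (scaleH a u)) = toRt a * Zpoly z (St u).
Proof. by rewrite !Zpoly_St big_map mulr_sumr; apply: eq_bigr => p _; rewrite toRtM mulrA. Qed.

End ZpolyLinearity.

Definition ZN (u : H) (N : nat) : {poly R} := Zpoly (zeta_tr^~ N) u.

Lemma ZN_lcons k u N : ZN (lconsH k u) N = Dsum k (ZN u) N.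
Proof.
rewrite /ZN /Zpoly big_map (Dsum_sum _ _ (fun p M => (zeta_tr p.2 M)%:P)).
apply: eq_bigr => -[a w] _; rewrite zeta_tr_consE rmorph_sum; congr (_ * _).
by apply: eq_bigr => M _; rewrite rmorphM.
Qed.

Lemma ZN_circ k u N : ZN (circH k u) N = Esum k (ZN u) N.
Proof.
rewrite /circH /ZN Zpoly_flatten big_map /Zpoly (Esum_sum _ _ (fun p M => (zeta_tr p.2 M)%:P)).
apply: eq_bigr => -[a [|l w]] _ /=.
  by rewrite big_nil /Esum big1 ?mulr0 // => M _; rewrite subrr mulr0.
rewrite big_seq1 /Esum mulr_sumr zeta_tr_consE rmorph_sum mulr_sumr.
apply: eq_bigr => M _; rewrite -rmorphB.
have -> : zeta_tr (l :: w) M.+1 - zeta_tr (l :: w) M = wt l M * zeta_tr w M.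
  by rewrite zeta_tr_consS addrAC subrr add0r.
by rewrite wtD !rmorphM; ring.
Qed.

Definition ZtN_word (w : word) (N : nat) : {poly R} := ZN (St_word w) N.
Definition ZtN (u : H) (N : nat) : {poly R} := ZN (St u) N.

Lemma ZtN_word_nil N : ZtN_word [::] N = 1.
Proof. by rewrite /ZtN_word /ZN /Zpoly big_seq1 toRt1 mul1r. Qed.

(* S^t(z_k w) = z_k S^t(w) + t z_k o S^t(w) becomes an interpolated sum. *)
Lemma ZtN_word_cons k w : ZtN_word (k :: w) = Tsum k (ZtN_word w).
Proof.
apply: functional_extensionality => N.
rewrite /ZtN_word /= /addH /ZN Zpoly_cat Zpoly_scale -!/(ZN _ _).
by rewrite toRt_polyX ZN_lcons ZN_circ Tsum_split.
Qed.

Lemma ZtNE u N : ZtN u N = \sum_(p <- u) toRt p.1 * ZtN_word p.2 N.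
Proof. exact: Zpoly_St. Qed.

Lemma ZtN_cat u v N : ZtN (u ++ v) N = ZtN u N + ZtN v N.
Proof. exact: Zpoly_St_cat. Qed.

Lemma ZtN_scale a u N : ZtN (scaleH a u) N = toRt a * ZtN u N.
Proof. exact: Zpoly_St_scale. Qed.

Lemma ZtN_flatten L N : ZtN (flatten L) N = \sum_(u <- L) ZtN u N.
Proof. by rewrite ZtNE big_flatten; apply: eq_bigr => u _; rewrite ZtNE. Qed.

Lemma ZtN_fun u : ZtN u = fun N => \sum_(p <- u) toRt p.1 * ZtN_word p.2 N.
Proof. by apply: functional_extensionality => N; rewrite ZtNE. Qed.

Lemma ZtN_lcons k u N : ZtN (lconsH k u) N = Tsum k (ZtN u) N.
Proof.
rewrite ZtNE big_map ZtN_fun (Tsum_sum _ _ (fun p => ZtN_word p.2)).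
by apply: eq_bigr => -[a w] _; rewrite ZtN_word_cons.
Qed.

Lemma ZtN_circ k u N : ZtN (circH k u) N = Esum k (ZtN u) N.
Proof.
rewrite (ZtN_fun u) (Esum_sum _ _ (fun p => ZtN_word p.2)) /circH ZtN_flatten big_map.
apply: eq_bigr => -[a [|l w]] _ /=; rewrite ZtNE.
  by rewrite big_nil /Esum big1 ?mulr0 // => M _; rewrite !ZtN_word_nil subrr mulr0.
by rewrite big_cons big_nil addr0 /= !ZtN_word_cons Esum_Tsum.
Qed.

Lemma star_word_cons a w b w' : star_word (a :: w) (b :: w') =
  addH (lconsH a (star_word w (b :: w')))
    (addH (lconsH b (star_word (a :: w) w'))
      (addH (scaleH (1 - 'X *+ 2) (lconsH (a + b) (star_word w w')))
            (scaleH ('X ^+ 2 - 'X) (circH (a + b) (star_word w w'))))).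
Proof. by []. Qed.

Lemma ZtN_star_word u v N : ZtN (star_word u v) N = ZtN_word u N * ZtN_word v N.
Proof.
elim: u v N => [|a w IHu] v N.
  by rewrite ZtNE big_seq1 toRt1 ZtN_word_nil !mul1r.
elim: v N => [|b w' IHv] N.
  by rewrite ZtNE big_seq1 toRt1 ZtN_word_nil mul1r mulr1.
rewrite star_word_cons /addH !ZtN_cat !ZtN_scale !ZtN_lcons ZtN_circ.
rewrite !(functional_extensionality _ _ (IHu _)) (functional_extensionality _ _ IHv).
have toRt_c1 : toRt (1 - 'X *+ 2) = 1 - 'X *+ 2.
  by rewrite /toRt rmorphB rmorph1 rmorphMn /= map_polyX.
have toRt_c2 : toRt ('X ^+ 2 - 'X) = 'X ^+ 2 - 'X.
  by rewrite /toRt rmorphB rmorphXn /= map_polyX.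
by rewrite !ZtN_word_cons -Tsum_mul toRt_c1 toRt_c2; ring.
Qed.

Lemma ZtN_starH u v N : ZtN (starH u v) N = ZtN u N * ZtN v N.
Proof.
rewrite /starH ZtN_flatten big_map (ZtNE u) mulr_suml; apply: eq_bigr => p _.
rewrite ZtN_flatten big_map (ZtNE v) mulr_sumr; apply: eq_bigr => q _.
by rewrite ZtN_scale ZtN_star_word toRtM; ring.
Qed.

(* Sums over the terms of an element that are additive in the coefficient
   depend only on the element itself, i.e. on its coefficient function. *)
Section CoefficientSums.
Variables (V : zmodType) (G : Qt -> word -> V).
Hypothesis G0 : forall w, G 0 w = 0.
Hypothesis GD : forall a b w, G (a + b) w = G a w + G b w.

Lemma sum_by_coef (u : H) (s : seq word) : uniq s -> {subset [seq p.2 | p <- u] <= s} ->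
  \sum_(p <- u) G p.1 p.2 = \sum_(w <- s) G (coefH u w) w.
Proof.
move=> s_uniq u_sub.
have GM w : {morph G^~ w : a b / a + b} by move=> a b; apply: GD.
under [RHS]eq_bigr do rewrite /coefH (big_morph _ (GM _) (G0 _)).
rewrite (exchange_big_dep xpredT) //=; apply: eq_big_seq => p p_u.
have p2_s : p.2 \in s by apply: u_sub; apply: map_f.
rewrite big_mkcond (bigD1_seq p.2) //= eqxx big1 ?addr0 // => w w_neq.
by rewrite eq_sym (negbTE w_neq).
Qed.

Lemma sum_coef_eq (u v : H) : coefH u =1 coefH v ->
  \sum_(p <- u) G p.1 p.2 = \sum_(p <- v) G p.1 p.2.
Proof.
move=> uv; set s := undup [seq p.2 | p <- u ++ v].
have s_uniq : uniq s by apply: undup_uniq.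
rewrite !(@sum_by_coef _ s s_uniq) => [|x|x]; last 2 first.
- by rewrite mem_undup map_cat mem_cat => ->; rewrite orbT.
- by rewrite mem_undup map_cat mem_cat => ->.
by apply: eq_bigr => w _; rewrite uv.
Qed.

End CoefficientSums.

Definition allW (Q : word -> bool) (u : H) : bool := all (fun p => Q p.2) u.

Definition adm_part (u : H) : H := [seq p <- u | adm p.2].

Lemma coefH_adm_part u : inh0 u -> coefH u =1 coefH (adm_part u).
Proof.
move=> u_h0 w; rewrite /coefH /adm_part big_filter_cond /=.
have [w_adm|w_nadm] := boolP (adm w).
  by apply: eq_bigl => p; case: eqP => [->|]; rewrite ?w_adm ?andbF.
rewrite [RHS]big_pred0; first exact: u_h0.
by move=> p; case: eqP => [->|]; rewrite ?(negbTE w_nadm) ?andbF.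
Qed.

Lemma allW_adm_part u : allW adm (adm_part u).
Proof. by rewrite /allW /adm_part all_filter; apply/allP => p _; apply/implyP. Qed.

Lemma allW_adm_inh0 u : allW adm u -> inh0 u.
Proof.
move=> /allP u_adm w w_nadm; rewrite /coefH big_seq_cond big_pred0 // => p.
apply/negbTE/andP => -[/u_adm p_adm /eqP p2_w]; move: p_adm; rewrite p2_w.
exact/negP.
Qed.

Lemma sum_adm_part (V : zmodType) (G : Qt -> word -> V) u :
  (forall w, G 0 w = 0) -> (forall a b w, G (a + b) w = G a w + G b w) -> inh0 u ->
  \sum_(p <- u) G p.1 p.2 = \sum_(p <- adm_part u) G p.1 p.2.
Proof. by move=> G0 GD u_h0; apply: sum_coef_eq => //; apply: coefH_adm_part. Qed.

Definition head_ge (m : nat) (w : word) : bool :=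
  if w is k :: w' then (m <= k)%N && pos w' else true.

Lemma head_ge1 w : head_ge 1 w = pos w. Proof. by case: w. Qed.
Lemma head_ge2 w : head_ge 2 w = adm w. Proof. by case: w. Qed.

Lemma head_ge_le m n w : (m <= n)%N -> head_ge n w -> head_ge m w.
Proof. by case: w => //= k w m_n /andP[n_k ->]; rewrite (leq_trans m_n n_k). Qed.

Lemma allW_cat Q u v : allW Q (u ++ v) = allW Q u && allW Q v.
Proof. exact: all_cat. Qed.

Lemma allW_scale Q a u : allW Q (scaleH a u) = allW Q u.
Proof. exact: all_map. Qed.

Lemma head_ge_lcons m k u : (m <= k)%N -> allW pos u -> allW (head_ge m) (lconsH k u).
Proof.
move=> m_k /allP u_pos; rewrite /allW all_map.
by apply/allP => p /u_pos /= ->; rewrite m_k.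
Qed.

Lemma head_ge_circ m k u : (m <= k)%N -> allW pos u -> allW (head_ge m) (circH k u).
Proof.
move=> m_k; elim: u => [|[a w] u IHu] //= /andP[p_pos /IHu u_head].
case: w p_pos => [//|l w] /andP[l_gt0 w_pos].
by rewrite /allW /= (leq_trans m_k (leq_addr _ _)); apply/andP.
Qed.

Lemma St_word_head_ge m w : head_ge m w -> allW (head_ge m) (St_word w).
Proof.
elim: w m => [|k w IHw] m //= /andP[m_k w_pos].
have St_pos : allW pos (St_word w).
  by apply: sub_all (IHw 1 _) => [p|]; rewrite ?head_ge1.
by rewrite /addH allW_cat allW_scale head_ge_lcons ?head_ge_circ.
Qed.

Lemma star_word_head_ge m n u v : (0 < m)%N -> (0 < n)%N ->
  head_ge m u -> head_ge n v -> allW (head_ge (minn m n)) (star_word u v).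
Proof.
elim: u m n v => [|a w IHu] m n v m_gt0 n_gt0 hu hv.
  by rewrite [star_word _ _]/= /allW all_seq1 (head_ge_le (geq_minr m n) hv).
elim: v n n_gt0 hv => [|b w' IHv] n n_gt0 hv.
  by rewrite [star_word _ _]/= /allW all_seq1 (head_ge_le (geq_minl m n) hu).
move: (hu) (hv) => /andP[m_a w_pos] /andP[n_b w'_pos].
have star_w v' : head_ge 1 v' -> allW pos (star_word w v').
  by move=> hv'; apply: sub_all (IHu 1 1 v' isT isT _ hv') => [p|]; rewrite ?head_ge1.
have star_aw : allW pos (star_word (a :: w) w').
  apply: sub_all (IHv 1 isT _) => [p|]; rewrite ?head_ge1 //.
  by rewrite (minn_idPr m_gt0) head_ge1.
have ma : (minn m n <= a)%N := leq_trans (geq_minl m n) m_a.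
have nb : (minn m n <= b)%N := leq_trans (geq_minr m n) n_b.
have mab : (minn m n <= a + b)%N := leq_trans ma (leq_addr b a).
have bw'_1 : head_ge 1 (b :: w') by rewrite /= w'_pos andbT (leq_trans n_gt0 n_b).
rewrite star_word_cons /addH !allW_cat !allW_scale.
by rewrite !head_ge_lcons ?head_ge_circ ?star_w ?head_ge1.
Qed.

Lemma allW_head_ge2 u : allW (head_ge 2) u = allW adm u.
Proof. by apply: eq_all => p; rewrite head_ge2. Qed.

Lemma coefH_flatten L w : coefH (flatten L) w = \sum_(u <- L) coefH u w.
Proof. exact: big_flatten. Qed.

Lemma coefH_scale a u w : coefH (scaleH a u) w = a * coefH u w.
Proof. by rewrite /coefH big_map mulr_sumr. Qed.

Lemma St_inh0 u : inh0 u -> inh0 (St u).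
Proof.
move=> u_h0 w w_nadm; rewrite /St coefH_flatten big_map.
under eq_bigr do rewrite coefH_scale.
rewrite (sum_adm_part (G := fun a v => a * coefH (St_word v) w)) //; last 2 first.
- by move=> v; rewrite mul0r.
- by move=> a b v; rewrite mulrDl.
rewrite big_seq big1 // => p; rewrite mem_filter => /andP[p_adm _].
have St_adm : allW adm (St_word p.2) by rewrite -allW_head_ge2 St_word_head_ge ?head_ge2.
by rewrite (allW_adm_inh0 St_adm) ?mulr0.
Qed.

Lemma starH_inh0 u v : inh0 u -> inh0 v -> inh0 (starH u v).
Proof.
move=> u_h0 v_h0 w w_nadm; rewrite /starH coefH_flatten big_map.
under eq_bigr do rewrite coefH_flatten big_map.
rewrite (sum_adm_part
  (G := fun a x => \sum_(q <- v) coefH (scaleH (a * q.1) (star_word x q.2)) w)) //;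
  last 2 first.
- by move=> x; apply: big1 => q _; rewrite coefH_scale !mul0r.
- by move=> a b x; rewrite -big_split; apply: eq_bigr => q _; rewrite !coefH_scale !mulrDl.
rewrite big_seq big1 // => p; rewrite mem_filter => /andP[p_adm _].
rewrite (sum_adm_part (G := fun b y => coefH (scaleH (p.1 * b) (star_word p.2 y)) w)) //;
  last 2 first.
- by move=> y; rewrite coefH_scale mulr0 mul0r.
- by move=> a b y; rewrite !coefH_scale mulrDr mulrDl.
rewrite big_seq big1 // => q; rewrite mem_filter => /andP[q_adm _].
have star_adm : allW adm (star_word p.2 q.2).
  by rewrite -allW_head_ge2 -[2%N]/(minn 2 2) star_word_head_ge ?head_ge2.
by rewrite coefH_scale (allW_adm_inh0 star_adm) ?mulr0.
Qed.

Lemma Zmap_Zpoly u n : Zmap u n = (Zpoly mzv u)`_n.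
Proof.
elim: u => [|p u IHu]; first by rewrite /Zpoly big_nil coef0.
by rewrite /Zpoly big_cons coefD coefMC coef_toRt -ratR_E -IHu.
Qed.

Lemma Zt_Zpoly u n : Zt u n = (Zpoly mzv (St u))`_n.
Proof. exact: Zmap_Zpoly. Qed.

Lemma sum_f_R0_big (f : nat -> R) n : sum_f_R0 f n = \sum_(i < n.+1) f i.
Proof. by elim: n => [|n IHn]; rewrite big_ord_recr ?big_ord0 /= ?add0r ?IHn. Qed.

Lemma Un_cv_ext (f g : nat -> R) l : f =1 g -> Un_cv f l -> Un_cv g l.
Proof.
move=> fg f_l e e_gt0; have [N fN] := f_l e e_gt0.
by exists N => n; rewrite -fg; apply: fN.
Qed.

Lemma Un_cv_sum (I : eqType) (s : seq I) (F : I -> nat -> R) (L : I -> R) :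
  {in s, forall i, Un_cv (F i) (L i)} ->
  Un_cv (fun N => \sum_(i <- s) F i N) (\sum_(i <- s) L i).
Proof.
elim: s => [|i s IHs] F_L.
  by rewrite big_nil; apply: Un_cv_ext (cv_const 0) => N; rewrite big_nil.
have F_L' : {in s, forall j, Un_cv (F j) (L j)}.
  by move=> j js; apply: F_L; rewrite inE js orbT.
rewrite big_cons; apply: Un_cv_ext (CV_plus _ _ _ _ (F_L i (mem_head _ _)) (IHs F_L')) => N.
by rewrite big_cons.
Qed.

Lemma Zpoly_adm_part z u : inh0 u -> Zpoly z u = Zpoly z (adm_part u).
Proof.
apply: (sum_adm_part (G := fun a w => toRt a * (z w)%:P)) => [w|a b w].
  by rewrite /toRt rmorph0 mul0r.
by rewrite /toRt rmorphD mulrDl.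
Qed.

Lemma coef_Zpoly z u n : (Zpoly z u)`_n = \sum_(p <- u) (toRt p.1)`_n * z p.2.
Proof. by rewrite /Zpoly coef_sum; apply: eq_bigr => p _; rewrite coefMC. Qed.

Lemma ZN_cvg u n : allW adm u -> Un_cv (fun N => (ZN u N)`_n) (Zpoly mzv u)`_n.
Proof.
move=> /allP u_adm; rewrite coef_Zpoly.
have term_cvg : {in u, forall p, Un_cv (fun N => (toRt p.1)`_n * zeta_tr p.2 N)
                                       ((toRt p.1)`_n * mzv p.2)}.
  by move=> p p_u; apply: CV_mult (cv_const _) (zeta_tr_cvg (u_adm p p_u)).
by apply: Un_cv_ext (Un_cv_sum term_cvg) => N; rewrite /ZN coef_Zpoly.
Qed.

Lemma ZtN_cvg u n : inh0 u -> Un_cv (fun N => (ZtN u N)`_n) (Zt u n).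
Proof.
move=> u_h0; have St_h0 := St_inh0 u_h0.
rewrite Zt_Zpoly (Zpoly_adm_part _ St_h0).
apply: Un_cv_ext (ZN_cvg n (allW_adm_part (St u))) => N.
by rewrite /ZtN /ZN (Zpoly_adm_part _ St_h0).
Qed.

Lemma Zt_starH u v : inh0 u -> inh0 v -> forall n, Zt (starH u v) n = Rtmul (Zt u) (Zt v) n.
Proof.
move=> u_h0 v_h0 n.
apply: (UL_sequence (fun N => (ZtN (starH u v) N)`_n)); first exact: ZtN_cvg (starH_inh0 u_h0 v_h0).
rewrite /Rtmul sum_f_R0_big.
have term_cvg : {in index_enum 'I_n.+1, forall i : 'I_n.+1,
    Un_cv (fun N => (ZtN u N)`_i * (ZtN v N)`_(n - i)) (Zt u i * Zt v (n - i)%N)}.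
  by move=> i _; apply: CV_mult (ZtN_cvg i u_h0) (ZtN_cvg (n - i)%N v_h0).
by apply: Un_cv_ext (Un_cv_sum term_cvg) => N; rewrite ZtN_starH coefM.
Qed.

Lemma Zt_one n : Zt oneH n = Rt1 n.
Proof.
rewrite Zt_Zpoly Zpoly_St big_seq1 /Zpoly big_seq1 toRt1 !mul1r mzv_nil coefC.
by case: n.
Qed.

Lemma Rtmul_coef (P Q : {poly R}) n : Rtmul (fun i => P`_i) (fun i => Q`_i) n = (P * Q)`_n.
Proof. by rewrite /Rtmul sum_f_R0_big coefM. Qed.

Lemma Zt_linear a b u v n :
  Zt (addH (scaleH a u) (scaleH b v)) n
  = Rtadd (Rtmul (QtR a) (Zt u)) (Rtmul (QtR b) (Zt v)) n.
Proof.
have QtR_coef c : QtR c = fun i => (toRt c)`_i.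
  by apply: functional_extensionality => i; rewrite /QtR coef_toRt ratR_E.
have Zt_coef x : Zt x = fun i => (Zpoly mzv (St x))`_i.
  by apply: functional_extensionality => i; rewrite Zt_Zpoly.
rewrite /Rtadd !QtR_coef !Zt_coef !Rtmul_coef.
by rewrite Zpoly_St_cat !Zpoly_St_scale coefD.
Qed.

Theorem mainTheorem8 :
  (forall u v : H, inh0 u -> inh0 v -> inh0 (starH u v)) /\
  (forall u v : H, inh0 u -> inh0 v ->
     forall n, Zt (starH u v) n = Rtmul (Zt u) (Zt v) n) /\
  (forall n, Zt oneH n = Rt1 n) /\
  (forall (a b : Qt) (u v : H), inh0 u -> inh0 v ->
     forall n, Zt (addH (scaleH a u) (scaleH b v)) n
               = Rtadd (Rtmul (QtR a) (Zt u)) (Rtmul (QtR b) (Zt v)) n).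
Proof.
split; first exact: starH_inh0.
split; first exact: Zt_starH.
split; first exact: Zt_one.
by move=> a b u v _ _; apply: Zt_linear.
Qed.
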